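(* Let $m$ be an odd positive integer and let $r,s\in\mathbb{Z}$ satisfy $2^{-1}+r^2+s^2\equiv 0\pmod m$, where $2^{-1}$ is the inverse of $2$ modulo $m$. Every $\mathbf{q}\in H_{1,2,2}$ is congruent modulo $mH_{1,2,2}$ to an element $q_1+q_2\mathbf{i}+q_3\sqrt2\,\mathbf{j}+q_4\sqrt2\,\mathbf{k}$ with $q_1,\dots,q_4\in\mathbb{Z}$; define $$\tau(\mathbf{q})=\begin{pmatrix}\alpha&\beta\\ \gamma&\delta\end{pmatrix},\quad \alpha=q_1-2rq_3-2sq_4,\ \beta=q_2-2sq_3+2rq_4,\ \gamma=-q_2-2sq_3+2rq_4,\ \delta=q_1+2rq_3+2sq_4,$$ with entries taken modulo $m$. Then $\tau$ is a well-defined ring isomorphism from $H_{1,2,2}/mH_{1,2,2}$ onto the ring $M_2(\mathbb{Z}/m\mathbb{Z})$ of $2\times2$ matrices over $\mathbb{Z}/m\mathbb{Z}$, and $\det\tau(\mathbf{q})\equiv N(\mathbf{q})\pmod m$ for all $\mathbf{q}\in H_{1,2,2}$.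
   Context: Let $\mathbf{i},\mathbf{j},\mathbf{k}$ be the standard quaternion units; $\overline{\mathbf{q}}$ is quaternion conjugation and $N(\mathbf{q})=\mathbf{q}\overline{\mathbf{q}}$. $H_{1,2,2}$ is the subring of the quaternions equal to the $\mathbb{Z}$-module generated by $\mathbf{v}_1=1$, $\mathbf{v}_2=\mathbf{i}$, $\mathbf{v}_3=\tfrac12(1+\mathbf{i}+\sqrt2\,\mathbf{j})$, $\mathbf{v}_4=\tfrac12(1+\mathbf{i}+\sqrt2\,\mathbf{k})$; the norm takes integer values on it. Such $r,s$ exist for every odd $m$. *)

(* Real quaternions over a real closed field R (contains sqrt 2). *)
From HB Require Import structures.
From mathcomp Require Import all_boot all_order all_algebra.
Set Implicit Arguments. Unset Strict Implicit. Unset Printing Implicit Defensive.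
Import Order.TTheory GRing.Theory Num.Theory.
Local Open Scope ring_scope.

Record quat (R : Type) := Quat { qr : R; qi : R; qj : R; qk : R }.
Arguments Quat {R}.

Section Quaternions.
Variable R : rcfType.

Definition qadd (p q : quat R) : quat R :=
  Quat (qr p + qr q) (qi p + qi q) (qj p + qj q) (qk p + qk q).
Definition qopp (p : quat R) : quat R := Quat (- qr p) (- qi p) (- qj p) (- qk p).
Definition qsub (p q : quat R) : quat R := qadd p (qopp q).
Definition qmul (p q : quat R) : quat R :=
  Quat (qr p * qr q - qi p * qi q - qj p * qj q - qk p * qk q)
       (qr p * qi q + qi p * qr q + qj p * qk q - qk p * qj q)
       (qr p * qj q - qi p * qk q + qj p * qr q + qk p * qi q)
       (qr p * qk q + qi p * qj q - qj p * qi q + qk p * qr q).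
Definition qconj (p : quat R) : quat R := Quat (qr p) (- qi p) (- qj p) (- qk p).
Definition qscal (c : R) : quat R := Quat c 0 0 0.
Definition qone : quat R := qscal 1.
Definition qzscale (n : int) (p : quat R) : quat R :=
  Quat (n%:~R * qr p) (n%:~R * qi p) (n%:~R * qj p) (n%:~R * qk p).
Definition qnorm (p : quat R) : quat R := qmul p (qconj p).

Definition sqrt2 : R := Num.sqrt 2.

(* generators of H_{1,2,2} *)
Definition v1 : quat R := qone.
Definition v2 : quat R := Quat 0 1 0 0.
Definition v3 : quat R := Quat (1/2) (1/2) (sqrt2 / 2) 0.
Definition v4 : quat R := Quat (1/2) (1/2) 0 (sqrt2 / 2).

Definition zcomb (a b c d : int) : quat R :=
  qadd (qadd (qzscale a v1) (qzscale b v2)) (qadd (qzscale c v3) (qzscale d v4)).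

Definition inH (q : quat R) : Prop := exists a b c d : int, q = zcomb a b c d.
Definition inmH (m : nat) (q : quat R) : Prop :=
  exists a b c d : int, q = qzscale m%:Z (zcomb a b c d).

Definition coords := (int * int * int * int)%type.

Definition std (x : coords) : quat R :=
  let '(x1, x2, x3, x4) := x in
  Quat x1%:~R x2%:~R (x3%:~R * sqrt2) (x4%:~R * sqrt2).

Definition rep (m : nat) (q : quat R) (x : coords) : Prop := inmH m (qsub q (std x)).
End Quaternions.

(* the integer matrix whose reduction mod m is tau(q) *)
Definition tau (r s : int) (x : coords) : 'M[int]_2 :=
  let '(q1, q2, q3, q4) := x in
  let a := q1 - 2 * r * q3 - 2 * s * q4 in
  let b := q2 - 2 * s * q3 + 2 * r * q4 in
  let c := - q2 - 2 * s * q3 + 2 * r * q4 in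
  let d := q1 + 2 * r * q3 + 2 * s * q4 in
  \matrix_(i < 2, j < 2)
    if (i : nat) == 0%N then (if (j : nat) == 0%N then a else b)
    else (if (j : nat) == 0%N then c else d).

(* equality in M_2(Z/mZ) of reductions of integer matrices *)
Definition eqmx_mod (m : nat) (A B : 'M[int]_2) : Prop :=
  forall i j : 'I_2, (A i j = B i j %[mod m%:Z])%Z.

Definition inv2 (m : nat) : int := ((m.+1) %/ 2)%N%:Z.

From HB Require Import structures.
From mathcomp Require Import all_boot all_order all_algebra.
From mathcomp Require Import ring zify.
Set Implicit Arguments.
Unset Strict Implicit.
Unset Printing Implicit Defensive.

Import Order.TTheory GRing.Theory Num.Theory.
Local Open Scope ring_scope.

(* An element of H_{1,2,2} has half-integral coordinates in the basis 1, i,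
   sqrt2 j, sqrt2 k; as 2 is invertible modulo the odd m, it is congruent
   modulo mH to q1 + q2 i + q3 sqrt2 j + q4 sqrt2 k for an integer vector q
   that is unique modulo m.  Since mH is a two-sided ideal of H, these integer
   representatives add and multiply like the quaternions they represent, so
   everything reduces to the integer map tau.  It is additive; it is
   multiplicative and sends q1^2 + q2^2 + 2 q3^2 + 2 q4^2 to the determinant up
   to multiples of 1 + 2r^2 + 2s^2, which vanishes modulo m; and it is inverted
   modulo m by solving a linear system with h = 1/2 and r^2 + s^2 = -h mod m. *)

Lemma dvdz_lincomb (x y d e w : int) :
  (d %| e)%Z -> w = x * d + y * e -> (d %| w)%Z.
Proof. by move=> de ->; apply: rpredD; apply: dvdz_mull. Qed.

Lemma dvdz_half (h z : int) : (2 * h - 1 %| 2 * z)%Z -> (2 * h - 1 %| z)%Z.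
Proof. by move=> d2z; apply: (dvdz_lincomb (x := - z) (y := h) d2z); ring. Qed.

Lemma odd_inv2 (m : nat) : odd m -> m%:Z = 2 * inv2 m - 1.
Proof.
move=> m_odd; have : (m.+1 %/ 2 * 2 = m.+1)%N by rewrite divnK // dvdn2 /= m_odd.
rewrite /inv2; lia.
Qed.

Definition cmul (x y : coords) : coords :=
  let '(x1, x2, x3, x4) := x in
  let '(y1, y2, y3, y4) := y in
  (x1 * y1 - x2 * y2 - 2 * x3 * y3 - 2 * x4 * y4,
   x1 * y2 + x2 * y1 + 2 * x3 * y4 - 2 * x4 * y3,
   x1 * y3 - x2 * y4 + x3 * y1 + x4 * y2,
   x1 * y4 + x2 * y3 - x3 * y2 + x4 * y1).

Definition cnorm (x : coords) : int :=
  let '(x1, x2, x3, x4) := x in x1 ^+ 2 + x2 ^+ 2 + 2 * x3 ^+ 2 + 2 * x4 ^+ 2.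

Definition cdvd (d : int) (x : coords) : Prop :=
  let '(x1, x2, x3, x4) := x in [/\ d %| x1, d %| x2, d %| x3 & d %| x4]%Z.

Section QuaternionAlgebra.
Variable R : rcfType.
Implicit Types (p q u : quat R) (n : int).

Local Ltac quat_ring :=
  unfold qsub, qadd, qopp, qmul, qconj, qzscale; simpl; congr Quat; ring.

Lemma qsub_split p q u : qsub p q = qadd (qsub p u) (qsub u q).
Proof. by quat_ring. Qed.

Lemma qopp_sub p q : qopp (qsub p q) = qsub q p.
Proof. by quat_ring. Qed.

Lemma qsubDD p q p' q' : qsub (qadd p q) (qadd p' q') = qadd (qsub p p') (qsub q q').
Proof. by quat_ring. Qed.

Lemma qsubMM p q p' q' :
  qsub (qmul p q) (qmul p' q') = qadd (qmul (qsub p p') q) (qmul p' (qsub q q')).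
Proof. by quat_ring. Qed.

Lemma qconj_sub p q : qconj (qsub p q) = qsub (qconj p) (qconj q).
Proof. by quat_ring. Qed.

Lemma qzscaleD n p q : qadd (qzscale n p) (qzscale n q) = qzscale n (qadd p q).
Proof. by quat_ring. Qed.

Lemma qzscaleN n p : qopp (qzscale n p) = qzscale n (qopp p).
Proof. by quat_ring. Qed.

Lemma qmulZl n p q : qmul (qzscale n p) q = qzscale n (qmul p q).
Proof. by quat_ring. Qed.

Lemma qmulZr n p q : qmul p (qzscale n q) = qzscale n (qmul p q).
Proof. by quat_ring. Qed.

Lemma qconjZ n p : qconj (qzscale n p) = qzscale n (qconj p).
Proof. by quat_ring. Qed.

End QuaternionAlgebra.

Section OrderH.
Variable R : rcfType.
Implicit Types (p q u : quat R) (n a b c d : int) (x y : coords).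

Lemma sqrt2_sqr : sqrt2 R * sqrt2 R = 2.
Proof. by rewrite -expr2 sqr_sqrtr ?ler0n. Qed.

Lemma sqrt2_neq0 : sqrt2 R != 0.
Proof.
by apply/eqP=> s0; move: sqrt2_sqr; rewrite s0 mul0r => /eqP; rewrite eq_sym pnatr_eq0.
Qed.

Definition qsqrt2 (a b c d : R) : quat R := Quat a b (c * sqrt2 R) (d * sqrt2 R).

Lemma qsqrt2_inj (a b c d a' b' c' d' : R) :
  qsqrt2 a b c d = qsqrt2 a' b' c' d' -> [/\ a = a', b = b', c = c' & d = d'].
Proof. by case=> -> -> /(mulIf sqrt2_neq0) -> /(mulIf sqrt2_neq0) ->. Qed.

Lemma qmul_qsqrt2 (a b c d a' b' c' d' : R) :
  qmul (qsqrt2 a b c d) (qsqrt2 a' b' c' d') =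
  qsqrt2 (a * a' - b * b' - 2 * c * c' - 2 * d * d') (a * b' + b * a' + 2 * c * d' - 2 * d * c')
         (a * c' - b * d' + c * a' + d * b') (a * d' + b * c' - c * b' + d * a').
Proof. by rewrite /qmul /qsqrt2 /=; congr Quat; rewrite -?sqrt2_sqr; ring. Qed.

Lemma qnorm_qsqrt2 (a b c d : R) :
  qnorm (qsqrt2 a b c d) = qscal (a ^+ 2 + b ^+ 2 + 2 * c ^+ 2 + 2 * d ^+ 2).
Proof.
by rewrite /qnorm /qmul /qconj /qsqrt2 /qscal /=; congr Quat; rewrite -?sqrt2_sqr; ring.
Qed.

Lemma zcombE a b c d : zcomb R a b c d =
  qsqrt2 (a%:~R + (c%:~R + d%:~R) / 2) (b%:~R + (c%:~R + d%:~R) / 2) (c%:~R / 2) (d%:~R / 2).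
Proof.
by rewrite /zcomb /qadd /qzscale /v1 /v2 /v3 /v4 /qone /qscal /qsqrt2 /=; congr Quat; field.
Qed.

Lemma zcomb_inj a b c d a' b' c' d' : zcomb R a b c d = zcomb R a' b' c' d' ->
  [/\ a = a', b = b', c = c' & d = d'].
Proof.
have two_neq0 : (2 : R) != 0 by rewrite pnatr_eq0.
have half_inj : injective (fun k : int => k%:~R / 2 : R).
  by move=> k k' /(mulIf (invr_neq0 two_neq0)) /intr_inj.
rewrite !zcombE => /qsqrt2_inj[ea eb /half_inj ec /half_inj ed].
by subst c' d'; split=> //; apply: (@intr_inj R); [apply: addIr ea | apply: addIr eb].
Qed.

Lemma zcombZ n a b c d :
  qzscale n (zcomb R a b c d) = zcomb R (n * a) (n * b) (n * c) (n * d).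
Proof. by rewrite !zcombE /qzscale /qsqrt2 /=; congr Quat; field. Qed.

Lemma zcombB a b c d a' b' c' d' :
  qsub (zcomb R a b c d) (zcomb R a' b' c' d') = zcomb R (a - a') (b - b') (c - c') (d - d').
Proof. by rewrite !zcombE /qsub /qadd /qopp /qsqrt2 /=; congr Quat; field. Qed.

Lemma std_zcomb (x1 x2 x3 x4 : int) :
  std R (x1, x2, x3, x4) = zcomb R (x1 - x3 - x4) (x2 - x3 - x4) (2 * x3) (2 * x4).
Proof. by rewrite zcombE /std /qsqrt2; congr Quat; field. Qed.

Lemma qscal_zcomb n : qscal n%:~R = zcomb R n 0 0 0.
Proof. by rewrite zcombE /qscal /qsqrt2; congr Quat; field. Qed.

Lemma std_one : std R (1, 0, 0, 0) = qone R.
Proof. by rewrite /std /qone /qscal !mul0r. Qed.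

Lemma stdB x y : qsub (std R x) (std R y) = std R (x - y).
Proof.
case: x y => [[[x1 x2] x3] x4] [[[y1 y2] y3] y4].
by rewrite /qsub /qadd /qopp /std /=; congr Quat; ring.
Qed.

Lemma stdD x y : qadd (std R x) (std R y) = std R (x + y).
Proof.
case: x y => [[[x1 x2] x3] x4] [[[y1 y2] y3] y4].
by rewrite /qadd /std /=; congr Quat; ring.
Qed.

Lemma stdM x y : qmul (std R x) (std R y) = std R (cmul x y).
Proof.
case: x y => [[[x1 x2] x3] x4] [[[y1 y2] y3] y4].
by rewrite -![std R _]/(qsqrt2 _ _ _ _) qmul_qsqrt2 /qsqrt2; congr Quat; ring.
Qed.

Lemma qnorm_std x : qnorm (std R x) = qscal (cnorm x)%:~R.
Proof.
case: x => [[[x1 x2] x3] x4].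
by rewrite -[std R _]/(qsqrt2 _ _ _ _) qnorm_qsqrt2 /=; congr qscal; ring.
Qed.

End OrderH.

Section Membership.
Variables (R : rcfType) (m : nat).
Implicit Types (p q u : quat R) (x y : coords).

Lemma inH_std x : inH (std R x).
Proof. by case: x => [[[x1 x2] x3] x4]; rewrite std_zcomb; do 4!eexists. Qed.

Lemma inH_add p q : inH p -> inH q -> inH (qadd p q).
Proof.
move=> [a [b [c [d ->]]]] [a' [b' [c' [d' ->]]]].
exists (a + a'), (b + b'), (c + c'), (d + d').
by rewrite !zcombE /qadd /qsqrt2 /=; congr Quat; field.
Qed.

Lemma inH_opp p : inH p -> inH (qopp p).
Proof.
move=> [a [b [c [d ->]]]]; exists (- a), (- b), (- c), (- d).
by rewrite !zcombE /qopp /qsqrt2 /=; congr Quat; field.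
Qed.

Lemma inH_mul p q : inH p -> inH q -> inH (qmul p q).
Proof.
move=> [a [b [c [d ->]]]] [a' [b' [c' [d' ->]]]].
exists (a * a' - b * b' - b * c' - b' * d - c * c' - d * d' - d * c'),
       (a * b' + b * a' + b * d' + b' * c + c * d' - d * c'),
       (a * c' - b * d' + a' * c + b' * d + (c + d) * c'),
       (a * d' + b * c' - b' * c + a' * d + d * (c' + d')).
by rewrite !zcombE qmul_qsqrt2 /qsqrt2; congr Quat; field.
Qed.

Lemma inH_conj p : inH p -> inH (qconj p).
Proof.
move=> [a [b [c [d ->]]]]; exists (a + c + d), (- b), (- c), (- d).
by rewrite !zcombE /qconj /qsqrt2 /=; congr Quat; field.
Qed.

Lemma qnorm_inH q : inH q -> exists n : int, qnorm q = qscal n%:~R.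
Proof.
move=> [a [b [c [d ->]]]].
exists (a ^+ 2 + b ^+ 2 + (a + b) * (c + d) + c ^+ 2 + d ^+ 2 + c * d).
by rewrite zcombE qnorm_qsqrt2; congr qscal; field.
Qed.

Lemma inmHP (t : quat R) : inmH m t <-> exists2 u, inH u & t = qzscale m%:Z u.
Proof.
split=> [[a [b [c [d ->]]]] | [_ [a [b [c [d ->]]]] ->]]; last by do 4!eexists.
by exists (zcomb R a b c d) => //; do 4!eexists.
Qed.

Lemma inmH_add p q : inmH m p -> inmH m q -> inmH m (qadd p q).
Proof.
move=> /inmHP[u Hu ->] /inmHP[v Hv ->]; apply/inmHP.
by exists (qadd u v); rewrite ?qzscaleD //; apply: inH_add.
Qed.

Lemma inmH_opp p : inmH m p -> inmH m (qopp p).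
Proof.
by move=> /inmHP[u Hu ->]; apply/inmHP; exists (qopp u); rewrite ?qzscaleN //; apply: inH_opp.
Qed.

Lemma inmH_mull p q : inH p -> inmH m q -> inmH m (qmul p q).
Proof.
move=> Hp /inmHP[u Hu ->]; apply/inmHP.
by exists (qmul p u); rewrite ?qmulZr //; apply: inH_mul.
Qed.

Lemma inmH_mulr p q : inmH m p -> inH q -> inmH m (qmul p q).
Proof.
move=> /inmHP[u Hu ->] Hq; apply/inmHP.
by exists (qmul u q); rewrite ?qmulZl //; apply: inH_mul.
Qed.

Lemma inmH_conj p : inmH m p -> inmH m (qconj p).
Proof.
by move=> /inmHP[u Hu ->]; apply/inmHP; exists (qconj u); rewrite ?qconjZ //; apply: inH_conj.
Qed.

Lemma inmH_zcomb a b c d :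
  inmH m (zcomb R a b c d) <-> [/\ m %| a, m %| b, m %| c & m %| d]%Z.
Proof.
split=> [[a' [b' [c' [d']]]] | [/dvdzP[a' ->] /dvdzP[b' ->] /dvdzP[c' ->] /dvdzP[d' ->]]].
  by rewrite zcombZ => /zcomb_inj[-> -> -> ->]; rewrite !dvdz_mulr.
by exists a', b', c', d'; rewrite zcombZ ![_ * m%:Z]mulrC.
Qed.

End Membership.

Definition eqmodH (R : rcfType) (m : nat) (p q : quat R) : Prop := inmH m (qsub p q).

Section CongruenceModmH.
Variables (R : rcfType) (m : nat).
Implicit Types (p q u : quat R) (x y : coords).

Lemma eqmodH_refl p : eqmodH m p p.
Proof.
by exists 0, 0, 0, 0; rewrite zcombE /qzscale /qsqrt2 /qsub /qadd /qopp /=; congr Quat; ring.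
Qed.

Lemma eqmodH_sym p q : eqmodH m p q -> eqmodH m q p.
Proof. by move=> pq; rewrite /eqmodH -qopp_sub; apply: inmH_opp. Qed.

Lemma eqmodH_trans u p q : eqmodH m p u -> eqmodH m u q -> eqmodH m p q.
Proof. by rewrite /eqmodH (qsub_split p q u); apply: inmH_add. Qed.

Lemma eqmodH_add p q p' q' :
  eqmodH m p p' -> eqmodH m q q' -> eqmodH m (qadd p q) (qadd p' q').
Proof. by rewrite /eqmodH qsubDD; apply: inmH_add. Qed.

Lemma eqmodH_mul p q p' q' : inH q -> inH p' ->
  eqmodH m p p' -> eqmodH m q q' -> eqmodH m (qmul p q) (qmul p' q').
Proof.
by move=> Hq Hp' pp' qq'; rewrite /eqmodH qsubMM; apply: inmH_add;
  [apply: inmH_mulr | apply: inmH_mull].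
Qed.

Lemma eqmodH_norm p p' : inH p -> inH p' -> eqmodH m p p' -> eqmodH m (qnorm p) (qnorm p').
Proof.
move=> Hp Hp' pp'; apply: eqmodH_mul => //; first exact: inH_conj.
by rewrite /eqmodH -qconj_sub; apply: inmH_conj.
Qed.

Lemma rep_one : rep m (qone R) (1, 0, 0, 0).
Proof. by rewrite /rep std_one; apply: eqmodH_refl. Qed.

Lemma rep_add p q x y : rep m p x -> rep m q y -> rep m (qadd p q) (x + y).
Proof. by rewrite /rep -stdD; apply: eqmodH_add. Qed.

Lemma rep_mul p q x y : inH q -> rep m p x -> rep m q y -> rep m (qmul p q) (cmul x y).
Proof. by rewrite /rep -stdM => Hq; apply: eqmodH_mul => //; apply: inH_std. Qed.

Lemma rep_norm q x : inH q -> rep m q x ->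
  exists n : int, qnorm q = qscal n%:~R /\ (m %| n - cnorm x)%Z.
Proof.
move=> Hq qx; have [n qn] := qnorm_inH Hq; exists n; split=> //.
have := eqmodH_norm Hq (inH_std R x) qx.
by rewrite qn qnorm_std /eqmodH !qscal_zcomb zcombB inmH_zcomb => -[].
Qed.

End CongruenceModmH.

Section RepresentativesModOdd.
Variables (R : rcfType) (m : nat) (h : int).
Hypothesis m_half : m%:Z = 2 * h - 1.
Implicit Types (p q : quat R) (x y : coords).

Lemma inmH_std x : inmH m (std R x) <-> cdvd m x.
Proof.
case: x => [[[x1 x2] x3] x4]; rewrite std_zcomb inmH_zcomb /= m_half.
split=> [[d1 d2 /dvdz_half d3 /dvdz_half d4] | [d1 d2 d3 d4]].
  by split=> //; rewrite -(rpredBr _ d3) -(rpredBr _ d4).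
by split; rewrite ?dvdz_mull // (rpredBr _ d4) (rpredBr _ d3).
Qed.

Lemma rep_exists q : inH q -> exists x, rep m q x.
Proof.
(* By [zcombE], q = (a + (c + d)/2) + (b + (c + d)/2) i + (c/2) sqrt2 j + (d/2) sqrt2 k. *)
move=> [a [b [c [d ->]]]]; exists (a + h * (c + d), b + h * (c + d), h * c, h * d).
rewrite /rep std_zcomb zcombB inmH_zcomb m_half.
by split; apply/dvdzP; [exists 0 | exists 0 | exists (- c) | exists (- d)]; ring.
Qed.

Lemma rep_eqmodH p q x y : rep m p x -> rep m q y -> eqmodH m p q <-> cdvd m (x - y).
Proof.
move=> px qy; rewrite -inmH_std -stdB -/(eqmodH m _ _); split=> pq.
  exact: eqmodH_trans (eqmodH_sym px) (eqmodH_trans pq qy).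
exact: eqmodH_trans px (eqmodH_trans pq (eqmodH_sym qy)).
Qed.

End RepresentativesModOdd.

Definition dvdmx (d : int) (A : 'M[int]_2) : Prop := forall i j, (d %| A i j)%Z.

Lemma eqmx_modE m A B : eqmx_mod m A B <-> dvdmx m%:Z (A - B).
Proof.
split=> AB i j; first by rewrite !mxE -eqz_mod_dvd (AB i j).
by apply/eqP; rewrite eqz_mod_dvd; have := AB i j; rewrite !mxE.
Qed.

Lemma eqmx_mod_trans m B A C : eqmx_mod m A B -> eqmx_mod m B C -> eqmx_mod m A C.
Proof. by move=> AB BC i j; rewrite AB BC. Qed.

Lemma forall_ord2 (P : 'I_2 -> 'I_2 -> Prop) :
  P ord0 ord0 -> P ord0 ord_max -> P ord_max ord0 -> P ord_max ord_max -> forall i j, P i j.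
Proof.
have ord2E (k : 'I_2) : k = ord0 \/ k = ord_max.
  by case: k => [[|[|//]]] lt_k2; [left | right]; apply: val_inj.
by move=> P00 P01 P10 P11 i j; case: (ord2E i) (ord2E j) => -> [] ->.
Qed.

Lemma mulmx2E (R : pzRingType) (A B : 'M[R]_2) i j :
  (A *m B) i j = A i ord0 * B ord0 j + A i ord_max * B ord_max j.
Proof.
rewrite mxE !big_ord_recl big_ord0 addr0.
by have -> : lift ord0 ord0 = ord_max :> 'I_2 by apply: val_inj.
Qed.

Lemma det2E (R : comPzRingType) (A : 'M[R]_2) :
  \det A = A ord0 ord0 * A ord_max ord_max - A ord0 ord_max * A ord_max ord0.
Proof.
have lift0 (k : 'I_1) : lift ord0 k = ord_max by apply: val_inj; rewrite /= [k]ord1.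
have lift1 (k : 'I_1) : lift ord_max k = ord0 by apply: val_inj; rewrite /= [k]ord1.
rewrite (expand_det_row _ ord0) !big_ord_recl big_ord0 addr0 /cofactor !det_mx11 !mxE.
by rewrite !lift0 !lift1 /=; ring.
Qed.

(* Solves tau x = A modulo m, i.e. a + d = 2 x1, b - c = 2 x2, d - a = 4 (r x3 + s x4)
   and b + c = -4 (s x3 - r x4), using 2 h = 1 and r^2 + s^2 = -h. *)
Definition tau_inv (h r s : int) (A : 'M[int]_2) : coords :=
  let a := A ord0 ord0 in let b := A ord0 ord_max in
  let c := A ord_max ord0 in let d := A ord_max ord_max in
  let u := h * (d - a) in let v := h * (b + c) in
  (h * (a + d), h * (b - c), s * v - r * u, - (s * u + r * v)).

Section TauLinear.
Variables r s : int.
Implicit Types (x y z : coords) (A : 'M[int]_2).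

Lemma tauD x y : tau r s (x + y) = tau r s x + tau r s y.
Proof.
case: x y => [[[x1 x2] x3] x4] [[[y1 y2] y3] y4].
by apply/matrixP; apply: forall_ord2; rewrite !mxE /=; ring.
Qed.

Lemma tauB x y : tau r s (x - y) = tau r s x - tau r s y.
Proof.
case: x y => [[[x1 x2] x3] x4] [[[y1 y2] y3] y4].
by apply/matrixP; apply: forall_ord2; rewrite !mxE /=; ring.
Qed.

Lemma tau_one : tau r s (1, 0, 0, 0) = 1%:M.
Proof. by apply/matrixP; apply: forall_ord2; rewrite !mxE /=; ring. Qed.

Local Ltac dvdz_closure :=
  repeat first [assumption | rewrite rpredN | apply: rpredB | apply: rpredD | apply: dvdz_mull].

Lemma dvdmx_tau d z : cdvd d z -> dvdmx d (tau r s z).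
Proof.
by case: z => [[[z1 z2] z3] z4] [d1 d2 d3 d4]; apply: forall_ord2; rewrite !mxE /=; dvdz_closure.
Qed.

Lemma tau_eqmod (m : nat) x y : cdvd m (x - y) -> eqmx_mod m (tau r s x) (tau r s y).
Proof. by move=> xy; apply/eqmx_modE; rewrite -tauB; apply: dvdmx_tau. Qed.

Lemma cdvd_tau_inv d h A : dvdmx d A -> cdvd d (tau_inv h r s A).
Proof.
move=> dA; have := dA ord0 ord0; have := dA ord0 ord_max.
have := dA ord_max ord0; have := dA ord_max ord_max.
by rewrite /tau_inv /= => *; split; dvdz_closure.
Qed.

End TauLinear.

Section TauCongruences.
Variables h r s : int.
Local Notation M := (2 * h - 1).
Local Notation E := (1 + 2 * r ^+ 2 + 2 * s ^+ 2).
Hypothesis dvd_K : (M %| h + r ^+ 2 + s ^+ 2)%Z.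
Implicit Types (x y z : coords) (A : 'M[int]_2).

Lemma dvd_E : (M %| E)%Z.
Proof. by apply: (dvdz_lincomb (x := -1) (y := 2) dvd_K); ring. Qed.

Lemma tauK z : cdvd M (tau_inv h r s (tau r s z) - z).
Proof.
case: z => [[[z1 z2] z3] z4]; rewrite /tau_inv !mxE /=; split.
- by apply: (dvdz_lincomb (x := z1) (y := 0) dvd_E); ring.
- by apply: (dvdz_lincomb (x := z2) (y := 0) dvd_E); ring.
- by apply: (dvdz_lincomb (x := z3) (y := - 2 * h * z3) dvd_E); ring.
- by apply: (dvdz_lincomb (x := z4) (y := - 2 * h * z4) dvd_E); ring.
Qed.

Lemma tau_invK A : dvdmx M (tau r s (tau_inv h r s A) - A).
Proof.
set a := A ord0 ord0; set b := A ord0 ord_max; set c := A ord_max ord0; set d := A ord_max ord_max.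
apply: forall_ord2; rewrite !mxE /= -/a -/b -/c -/d.
- by apply: (dvdz_lincomb (x := a) (y := h * (d - a)) dvd_E); ring.
- by apply: (dvdz_lincomb (x := b) (y := - h * (b + c)) dvd_E); ring.
- by apply: (dvdz_lincomb (x := c) (y := - h * (b + c)) dvd_E); ring.
- by apply: (dvdz_lincomb (x := d) (y := - h * (d - a)) dvd_E); ring.
Qed.

Lemma cdvd_tau z : dvdmx M (tau r s z) -> cdvd M z.
Proof.
move=> /(cdvd_tau_inv r s h); move: (tauK z).
move: (tau_inv h r s (tau r s z)) => t.
case: z t => [[[z1 z2] z3] z4] [[[t1 t2] t3] t4] [e1 e2 e3 e4] [d1 d2 d3 d4].
by split; [rewrite -(rpredBl _ d1) | rewrite -(rpredBl _ d2)
          | rewrite -(rpredBl _ d3) | rewrite -(rpredBl _ d4)].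
Qed.

Lemma tauM x y : dvdmx M (tau r s (cmul x y) - tau r s x *m tau r s y).
Proof.
case: x y => [[[x1 x2] x3] x4] [[[y1 y2] y3] y4].
apply: forall_ord2; rewrite mxE [X in _ + X]mxE mulmx2E !mxE /=.
- by apply: (dvdz_lincomb (x := 0) (y := - 2 * (x3 * y3 + x4 * y4)) dvd_E); ring.
- by apply: (dvdz_lincomb (x := 0) (y := - 2 * (x4 * y3 - x3 * y4)) dvd_E); ring.
- by apply: (dvdz_lincomb (x := 0) (y := 2 * (x4 * y3 - x3 * y4)) dvd_E); ring.
- by apply: (dvdz_lincomb (x := 0) (y := - 2 * (x3 * y3 + x4 * y4)) dvd_E); ring.
Qed.

Lemma det_tau x : (M %| \det (tau r s x) - cnorm x)%Z.
Proof.
case: x => [[[x1 x2] x3] x4]; rewrite det2E !mxE /=.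
by apply: (dvdz_lincomb (x := 0) (y := - 2 * (x3 ^+ 2 + x4 ^+ 2)) dvd_E); ring.
Qed.

End TauCongruences.

Section TauOnH.
Variables (R : rcfType) (m : nat) (h r s : int).
Hypothesis m_half : m%:Z = 2 * h - 1.
Hypothesis dvd_K : (2 * h - 1 %| h + r ^+ 2 + s ^+ 2)%Z.
Implicit Types (p q : quat R) (x y : coords).

Lemma rep_tau_eqmod p q x y :
  eqmodH m p q -> rep m p x -> rep m q y -> eqmx_mod m (tau r s x) (tau r s y).
Proof. by move=> pq px qy; apply/tau_eqmod/(rep_eqmodH m_half px qy). Qed.

Lemma rep_tau_inj p q x y :
  rep m p x -> rep m q y -> eqmx_mod m (tau r s x) (tau r s y) -> eqmodH m p q.
Proof.
move=> px qy /eqmx_modE; rewrite -tauB m_half => /(cdvd_tau dvd_K).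
by rewrite -m_half => /(rep_eqmodH m_half px qy).
Qed.

Lemma tauM_eqmod x y : eqmx_mod m (tau r s (cmul x y)) (tau r s x *m tau r s y).
Proof. by apply/eqmx_modE; rewrite m_half; apply: tauM. Qed.

Lemma tau_invK_eqmod A : eqmx_mod m (tau r s (tau_inv h r s A)) A.
Proof. by apply/eqmx_modE; rewrite m_half; apply: tau_invK. Qed.

Lemma rep_det_tau q x : inH q -> rep m q x ->
  exists n : int, qnorm q = qscal n%:~R /\ (\det (tau r s x) = n %[mod m%:Z])%Z.
Proof.
move=> Hq qx; have [n [qn dvd_n]] := rep_norm Hq qx; exists n; split=> //.
have := det_tau dvd_K x; rewrite -m_half => dvd_det; apply/eqP; rewrite eqz_mod_dvd.
have -> : \det (tau r s x) - n = (\det (tau r s x) - cnorm x) - (n - cnorm x) by ring.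
exact: rpredB.
Qed.

End TauOnH.

Theorem theorem26 (R : rcfType) (m : nat) (r s : int) :
  odd m -> (0 < m)%N ->
  (inv2 m + r ^+ 2 + s ^+ 2 = 0 %[mod m%:Z])%Z ->
  (* every element of H has an integer representative mod mH *)
  (forall q : quat R, inH q -> exists x : coords, rep m q x) /\
  (* well-defined on H / mH *)
  (forall (p q : quat R) (x y : coords), inH p -> inH q -> inmH m (qsub p q) ->
     rep m p x -> rep m q y -> eqmx_mod m (tau r s x) (tau r s y)) /\
  (* additive *)
  (forall (p q : quat R) (x y z : coords), inH p -> inH q ->
     rep m p x -> rep m q y -> rep m (qadd p q) z ->
     eqmx_mod m (tau r s z) (tau r s x + tau r s y)) /\
  (* multiplicative *)
  (forall (p q : quat R) (x y z : coords), inH p -> inH q ->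
     rep m p x -> rep m q y -> rep m (qmul p q) z ->
     eqmx_mod m (tau r s z) (tau r s x *m tau r s y)) /\
  (* unital *)
  (forall x : coords, rep m (qone R) x -> eqmx_mod m (tau r s x) 1%:M) /\
  (* injective on H / mH *)
  (forall (p q : quat R) (x y : coords), inH p -> inH q ->
     rep m p x -> rep m q y -> eqmx_mod m (tau r s x) (tau r s y) ->
     inmH m (qsub p q)) /\
  (* surjective onto M_2(Z/mZ) *)
  (forall M : 'M[int]_2, exists (q : quat R) (x : coords),
     [/\ inH q, rep m q x & eqmx_mod m (tau r s x) M]) /\
  (* det tau(q) = N(q) mod m *)
  (forall (q : quat R) (x : coords), inH q -> rep m q x ->
     exists n : int, qnorm q = qscal n%:~R /\ (\det (tau r s x) = n %[mod m%:Z])%Z).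
Proof.
move=> m_odd _ /eqP; rewrite eqz_mod_dvd subr0 => dvd_K.
have m_half := odd_inv2 m_odd; rewrite m_half in dvd_K; set h := inv2 m in m_half dvd_K *.
have rep_tau := rep_tau_eqmod r s m_half (eqmodH_refl _ _).
split; first exact: rep_exists m_half.
split; first by move=> p q x y _ _; apply: (rep_tau_eqmod r s m_half).
split.
  by move=> p q x y z _ _ px qy pqz; rewrite -tauD; apply: rep_tau pqz (rep_add px qy).
split.
  move=> p q x y z _ Hq px qy pqz; apply: eqmx_mod_trans (tauM_eqmod m_half dvd_K _ _).
  exact: rep_tau pqz (rep_mul Hq px qy).
split.
  by move=> x x1; rewrite -(tau_one r s); apply: rep_tau x1 (rep_one _ _).
split; first by move=> p q x y _ _ px qy /(rep_tau_inj m_half dvd_K px qy).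
split.
  move=> A; exists (std R (tau_inv h r s A)), (tau_inv h r s A); split.
  - exact: inH_std.
  - exact: eqmodH_refl.
  - exact: (tau_invK_eqmod m_half dvd_K).
exact: (rep_det_tau m_half dvd_K).
Qed.
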